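(* For $n\ge 0$ let $s_n=\sum_{r=0}^{n}1/r!$. For every positive integer $k$ there exists a constant $n(k)$ such that for all $n\ge n(k)$, among the $k$ consecutive partial sums $s_n, s_{n+1},\dots,s_{n+k-1}$ at most two are convergents of the simple continued fraction expansion of $e$.
   Context: The convergents of $e$ are the rationals obtained by truncating the simple continued fraction expansion of $e$; a partial sum $s_n$ ''is a convergent'' if it equals one of these rationals. *)

From Stdlib Require Import Reals ZArith Lia Lra.
Open Scope R_scope.

(* Partial sums s_n = sum_{r=0}^{n} 1/r!  (sum_f_R0 f n has n+1 terms). *)
Definition s (n : nat) : R := sum_f_R0 (fun r => / INR (fact r)) n.

Definition rfloor (x : R) : Z := (up x - 1)%Z.

Fixpoint cq (x : R) (k : nat) : R :=
  match k with
  | O => x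
  | S k' => / (cq x k' - IZR (rfloor (cq x k')))
  end.

Definition pq (x : R) (k : nat) : Z := rfloor (cq x k).

(* Numerators/denominators of convergents by the standard recurrence:
   returns ((p_n, q_n), (p_{n-1}, q_{n-1})) with p_{-1} = 1, q_{-1} = 0. *)
Fixpoint cf_pq (a : nat -> Z) (n : nat) : (Z * Z) * (Z * Z) :=
  match n with
  | O => ((a O, 1%Z), (1%Z, 0%Z))
  | S m =>
      let '((p, q), (p', q')) := cf_pq a m in
      (((a n * p + p')%Z, (a n * q + q')%Z), (p, q))
  end.

Definition convergent (x : R) (n : nat) : R :=
  let '((p, q), _) := cf_pq (pq x) n in IZR p / IZR q.

(* r is a convergent of x: r equals p_n/q_n for some index n at which the
   expansion of x is still defined (it has not terminated before step n). *)
Definition is_convergent (x r : R) : Prop :=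
  exists n : nat,
    (forall j : nat, (j < n)%nat -> cq x j <> IZR (rfloor (cq x j))) /\
    r = convergent x n.

(* Write s_m = N_m / m!.  If s_m = p/q is a convergent of e, then e - p/q <= 1/q^2
   while e - s_m > 1/(m+1)!, so q^2 < (m+1)!; since p/q is in lowest terms,
   d = m!/q is a common divisor of N_m and m! with (m+1) d^2 > m!.
   For m < m' one has N_m' = N_m (m'!/m!) + T with a tail T that is small
   (polynomial in m' when m' - m is bounded), so gcd(d, d') divides T.  For three
   such indices m1 < m2 < m3 this gives d1 d2 d3 <= m3! T12 T13 T23, and squaring,
   m1! m2! m3! < (m3+1)^3 (d1 d2 d3)^2 <= (m3+1)^3 m3!^2 (T12 T13 T23)^2.  When all
   three indices lie in [n, n+k) this bounds n! by a polynomial in n. *)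

From Stdlib Require Import Reals ZArith Lia Lra.
Open Scope R_scope.

Definition cf_p (a : nat -> Z) (n : nat) : Z := fst (fst (cf_pq a n)).
Definition cf_q (a : nat -> Z) (n : nat) : Z := snd (fst (cf_pq a n)).
Definition cf_pprev (a : nat -> Z) (n : nat) : Z := fst (snd (cf_pq a n)).
Definition cf_qprev (a : nat -> Z) (n : nat) : Z := snd (snd (cf_pq a n)).

Lemma cf_pq_S (a : nat -> Z) (m : nat) : cf_pq a (S m) =
  (((a (S m) * cf_p a m + cf_pprev a m)%Z, (a (S m) * cf_q a m + cf_qprev a m)%Z),
   (cf_p a m, cf_q a m)).
Proof.
  unfold cf_p, cf_q, cf_pprev, cf_qprev; simpl.
  now destruct (cf_pq a m) as [[p q] [p' q']].
Qed.

Lemma cf_p_S (a : nat -> Z) (m : nat) : cf_p a (S m) = (a (S m) * cf_p a m + cf_pprev a m)%Z.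
Proof. unfold cf_p at 1; now rewrite cf_pq_S. Qed.

Lemma cf_q_S (a : nat -> Z) (m : nat) : cf_q a (S m) = (a (S m) * cf_q a m + cf_qprev a m)%Z.
Proof. unfold cf_q at 1; now rewrite cf_pq_S. Qed.

Lemma cf_pprev_S (a : nat -> Z) (m : nat) : cf_pprev a (S m) = cf_p a m.
Proof. unfold cf_pprev at 1; now rewrite cf_pq_S. Qed.

Lemma cf_qprev_S (a : nat -> Z) (m : nat) : cf_qprev a (S m) = cf_q a m.
Proof. unfold cf_qprev at 1; now rewrite cf_pq_S. Qed.

Lemma cf_det (a : nat -> Z) (n : nat) :
  (cf_p a n * cf_qprev a n - cf_pprev a n * cf_q a n = 1 \/
   cf_p a n * cf_qprev a n - cf_pprev a n * cf_q a n = -1)%Z.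
Proof.
  induction n as [|n IH].
  - unfold cf_p, cf_q, cf_pprev, cf_qprev; simpl; lia.
  - rewrite cf_p_S, cf_q_S, cf_pprev_S, cf_qprev_S; lia.
Qed.

Lemma convergent_eq (x : R) (n : nat) :
  convergent x n = IZR (cf_p (pq x) n) / IZR (cf_q (pq x) n).
Proof. unfold convergent, cf_p, cf_q; now destruct (cf_pq (pq x) n) as [[p q] prev]. Qed.

Lemma rfloor_spec (y : R) : IZR (rfloor y) <= y < IZR (rfloor y) + 1.
Proof. unfold rfloor; destruct (archimed y); rewrite minus_IZR; simpl; lra. Qed.

Lemma frac_pos (y : R) : y <> IZR (rfloor y) -> 0 < y - IZR (rfloor y) < 1.
Proof. intros Hy; destruct (rfloor_spec y) as [[H|H] H']; [lra | exfalso; apply Hy; lra]. Qed.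

Definition cf_defined (x : R) (n : nat) : Prop :=
  forall j : nat, (j < n)%nat -> cq x j <> IZR (rfloor (cq x j)).

Lemma cf_defined_pred (x : R) (n : nat) : cf_defined x (S n) -> cf_defined x n.
Proof. intros H j Hj; apply H; lia. Qed.

Lemma pq_ge1 (x : R) (n j : nat) : cf_defined x n -> (1 <= j <= n)%nat -> (1 <= pq x j)%Z.
Proof.
  intros H Hj; destruct j as [|j]; [lia|].
  pose proof (frac_pos _ (H j ltac:(lia))) as Ht.
  unfold pq; simpl cq.
  set (y := / (cq x j - IZR (rfloor (cq x j)))).
  assert (Hy : 1 < y) by (unfold y; rewrite <- Rinv_1; apply Rinv_lt_contravar; lra).
  destruct (rfloor_spec y).
  assert (0 < IZR (rfloor y)) as Hpos by lra; apply lt_IZR in Hpos; lia.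
Qed.

Lemma cf_q_pos (x : R) (n j : nat) : cf_defined x n -> (j <= n)%nat ->
  (1 <= cf_q (pq x) j /\ 0 <= cf_qprev (pq x) j)%Z.
Proof.
  intros H; induction j as [|j IH]; intros Hj.
  - unfold cf_q, cf_qprev; simpl; lia.
  - rewrite cf_q_S, cf_qprev_S.
    destruct IH as [Hq Hq']; [lia|].
    pose proof (pq_ge1 x n (S j) H ltac:(lia)); nia.
Qed.

Lemma cf_complete_quotient (x : R) (n : nat) : cf_defined x n ->
  let t := cq x n - IZR (pq x n) in
  x * (IZR (cf_q (pq x) n) + IZR (cf_qprev (pq x) n) * t)
  = IZR (cf_p (pq x) n) + IZR (cf_pprev (pq x) n) * t.
Proof.
  induction n as [|n IH]; intros H t.
  - unfold t, cf_q, cf_qprev, cf_p, cf_pprev; simpl; ring.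
  - specialize (IH (cf_defined_pred _ _ H)); simpl in IH.
    pose proof (frac_pos _ (H n (Nat.lt_succ_diag_r n))) as Ht0.
    fold (pq x n) in Ht0.
    set (t0 := cq x n - IZR (pq x n)) in *.
    assert (Hinv : IZR (pq x (S n)) + t = / t0).
    { change (cq x (S n)) with (/ t0) in t; unfold t; lra. }
    rewrite cf_p_S, cf_q_S, cf_pprev_S, cf_qprev_S, !plus_IZR, !mult_IZR.
    set (a := IZR (pq x (S n))) in *.
    set (P := IZR (cf_p (pq x) n)) in *; set (Q := IZR (cf_q (pq x) n)) in *.
    set (P' := IZR (cf_pprev (pq x) n)) in *; set (Q' := IZR (cf_qprev (pq x) n)) in *.
    clearbody P Q P' Q' a t t0.
    replace (a * Q + Q' + Q * t) with ((Q + Q' * t0) / t0)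
      by (replace t with (/ t0 - a) by lra; field; lra).
    replace (a * P + P' + P * t) with ((P + P' * t0) / t0)
      by (replace t with (/ t0 - a) by lra; field; lra).
    unfold Rdiv; rewrite <- Rmult_assoc, IH; reflexivity.
Qed.

Lemma cf_approx (x : R) (n : nat) : cf_defined x n ->
  x - IZR (cf_p (pq x) n) / IZR (cf_q (pq x) n)
  <= / (IZR (cf_q (pq x) n) * IZR (cf_q (pq x) n)).
Proof.
  intros H.
  pose proof (cf_complete_quotient x n H) as Hx; simpl in Hx.
  destruct (cf_q_pos x n n H (Nat.le_refl n)) as [Hq Hq'].
  apply IZR_le in Hq, Hq'.
  pose proof (rfloor_spec (cq x n)) as Hfl; fold (pq x n) in Hfl.
  assert (Hdet : IZR (cf_p (pq x) n) * IZR (cf_qprev (pq x) n)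
                 - IZR (cf_pprev (pq x) n) * IZR (cf_q (pq x) n) = 1 \/
                 IZR (cf_p (pq x) n) * IZR (cf_qprev (pq x) n)
                 - IZR (cf_pprev (pq x) n) * IZR (cf_q (pq x) n) = -1).
  { rewrite <- !mult_IZR, <- minus_IZR.
    destruct (cf_det (pq x) n) as [D|D]; rewrite D; [left|right]; reflexivity. }
  set (t := cq x n - IZR (pq x n)) in *.
  assert (Ht : 0 <= t < 1) by (unfold t; lra).
  set (P := IZR (cf_p (pq x) n)) in *; set (Q := IZR (cf_q (pq x) n)) in *.
  set (P' := IZR (cf_pprev (pq x) n)) in *; set (Q' := IZR (cf_qprev (pq x) n)) in *.
  clearbody P Q P' Q' t.
  assert (HD : Q <= Q + Q' * t) by nra.
  assert (Hdiff : x - P / Q = t * (P' * Q - P * Q') / (Q * (Q + Q' * t))).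
  { replace x with ((P + P' * t) / (Q + Q' * t)) by (rewrite <- Hx; field; lra).
    field; lra. }
  rewrite Hdiff.
  apply (Rmult_le_reg_r (Q * (Q + Q' * t))); [nra|].
  unfold Rdiv; rewrite Rmult_assoc, Rinv_l by nra.
  replace (/ (Q * Q) * (Q * (Q + Q' * t))) with (1 + Q' * t / Q) by (field; lra).
  assert (0 <= Q' * t / Q) by (apply Rmult_le_pos; [nra | left; apply Rinv_0_lt_compat; lra]).
  destruct Hdet as [D|D]; nra.
Qed.

Fixpoint s_num (m : nat) : nat :=
  match m with O => 1%nat | S m' => (S m' * s_num m' + 1)%nat end.

Lemma fact_pos (m : nat) : 0 < INR (fact m).
Proof. apply lt_0_INR, lt_O_fact. Qed.

Lemma s_eq (m : nat) : s m = INR (s_num m) / INR (fact m).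
Proof.
  induction m as [|m IH]; [unfold s; simpl; field|].
  change (s (S m)) with (s m + / INR (fact (S m))).
  change (s_num (S m)) with (S m * s_num m + 1)%nat.
  change (fact (S m)) with (S m * fact m)%nat.
  rewrite IH, plus_INR, !mult_INR.
  pose proof (fact_pos m); pose proof (lt_0_INR (S m) (Nat.lt_0_succ m)).
  change (INR 1) with 1; field; lra.
Qed.

Lemma s_cv : Un_cv s (exp 1).
Proof.
  unfold exp; destruct (exist_exp 1) as [l Hl]; simpl.
  intros eps Heps; destruct (Hl eps Heps) as [N HN]; exists N; intros n Hn.
  replace (s n) with (sum_f_R0 (fun i => / INR (fact i) * 1 ^ i) n); [exact (HN n Hn)|].
  apply sum_eq; intros; rewrite pow1; ring.
Qed.

Lemma s_add_lt_exp1 (m : nat) : s m + / INR (fact (S m)) < exp 1.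
Proof.
  assert (Hgrow : Un_growing s).
  { intro n; change (s (S n)) with (s n + / INR (fact (S n))).
    pose proof (Rinv_0_lt_compat _ (fact_pos (S n))); lra. }
  pose proof (growing_ineq s (exp 1) Hgrow s_cv (S (S m))).
  change (s (S (S m))) with (s m + / INR (fact (S m)) + / INR (fact (S (S m)))) in H.
  pose proof (Rinv_0_lt_compat _ (fact_pos (S (S m)))); lra.
Qed.

Lemma unimodular_fraction (p q p' q' N F : Z) :
  (p * q' - p' * q = 1 \/ p * q' - p' * q = -1)%Z -> (N * q = p * F)%Z ->
  exists d : Z, (N = p * d /\ F = q * d)%Z.
Proof.
  intros Hdet Heq.
  assert (HN : (N * (p * q' - p' * q) = p * (N * q' - F * p'))%Z).
  { replace (N * (p * q' - p' * q))%Z with (p * N * q' - p' * (N * q))%Z by ring.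
    rewrite Heq; ring. }
  assert (HF : (F * (p * q' - p' * q) = q * (N * q' - F * p'))%Z).
  { replace (q * (N * q' - F * p'))%Z with ((N * q) * q' - q * F * p')%Z by ring.
    rewrite Heq; ring. }
  destruct Hdet as [Hdet|Hdet]; rewrite Hdet in HN, HF;
    [exists (N * q' - F * p')%Z | exists (F * p' - N * q')%Z]; split; lia.
Qed.

Lemma convergent_s_divisor (m : nat) : is_convergent (exp 1) (s m) ->
  exists d : Z, (0 < d)%Z /\ (d | Z.of_nat (s_num m))%Z /\ (d | Z.of_nat (fact m))%Z /\
                (Z.of_nat (fact m) < Z.of_nat (S m) * d * d)%Z.
Proof.
  intros [n [Hdef Hs]].
  pose proof (cf_approx _ _ Hdef) as Happ.
  destruct (cf_q_pos _ n n Hdef (Nat.le_refl n)) as [Hq _].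
  pose proof (cf_det (pq (exp 1)) n) as Hdet.
  pose proof (s_add_lt_exp1 m) as Hgt.
  change (fact (S m)) with (S m * fact m)%nat in Hgt.
  rewrite convergent_eq, s_eq in Hs; rewrite s_eq in Hgt.
  rewrite mult_INR, !INR_IZR_INZ in Hgt; rewrite !INR_IZR_INZ in Hs.
  set (P := cf_p (pq (exp 1)) n) in *; set (Q := cf_q (pq (exp 1)) n) in *.
  set (F := Z.of_nat (fact m)) in *; set (N := Z.of_nat (s_num m)) in *.
  set (M := Z.of_nat (S m)) in *.
  assert (HF : (0 < F)%Z) by (pose proof (lt_O_fact m); lia).
  assert (HM : (0 < M)%Z) by lia.
  apply IZR_lt in HF, HM; apply IZR_le in Hq.
  assert (HNQ : (N * Q = P * F)%Z).
  { apply eq_IZR; rewrite !mult_IZR.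
    apply (Rmult_eq_reg_r (/ (IZR F * IZR Q))); [|apply Rinv_neq_0_compat; nra].
    replace (IZR N * IZR Q * / (IZR F * IZR Q)) with (IZR N / IZR F) by (field; lra).
    rewrite Hs; field; lra. }
  assert (HQQ : (Q * Q < M * F)%Z).
  { apply lt_IZR; rewrite !mult_IZR.
    destruct (Rlt_or_le (IZR Q * IZR Q) (IZR M * IZR F)) as [H|H]; [exact H|].
    pose proof (Rinv_le_contravar _ _ (Rmult_lt_0_compat _ _ HM HF) H).
    rewrite Hs in Hgt; lra. }
  apply lt_IZR in HF, HM; apply le_IZR in Hq.
  destruct (unimodular_fraction _ _ _ _ N F Hdet HNQ) as [d [HN HFd]].
  exists d; repeat split.
  - nia.
  - exists P; lia.
  - exists Q; lia.
  - nia.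
Qed.

Lemma pow_lt_fact_eventually (x : nat) :
  exists N : nat, forall n : nat, (N <= n)%nat -> (x ^ n < fact n)%nat.
Proof.
  destruct (cv_speed_pow_fact (INR x) 1 Rlt_0_1) as [N HN].
  exists N; intros n Hn; specialize (HN n Hn).
  unfold Rdist in HN; rewrite Rminus_0_r in HN.
  pose proof (fact_pos n) as Hf.
  assert (Hpos : 0 <= INR x ^ n / INR (fact n))
    by (apply Rmult_le_pos; [apply pow_le, pos_INR | left; apply Rinv_0_lt_compat, Hf]).
  rewrite Rabs_pos_eq in HN by exact Hpos.
  apply INR_lt; rewrite pow_INR.
  apply (Rmult_lt_reg_r (/ INR (fact n))); [now apply Rinv_0_lt_compat|].
  rewrite Rinv_r by lra; exact HN.
Qed.

Lemma poly_lt_fact_eventually (a c : nat) :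
  exists N : nat, forall n : nat, (N <= n)%nat -> ((n + a) ^ c < fact n)%nat.
Proof.
  destruct (pow_lt_fact_eventually (4 ^ c)) as [N HN].
  exists (Nat.max N (Nat.max a 1)); intros n Hn.
  assert (H4n : (2 * n <= 4 ^ n)%nat).
  { change 4%nat with (2 * 2)%nat; rewrite Nat.pow_mul_l.
    pose proof (Nat.pow_gt_lin_r 2 n ltac:(lia)).
    pose proof (Nat.pow_le_mono_r 2 1 n ltac:(lia) ltac:(lia)); simpl in *; nia. }
  apply (Nat.le_lt_trans _ ((4 ^ n) ^ c)).
  - apply Nat.pow_le_mono_l; lia.
  - rewrite <- Nat.pow_mul_r, Nat.mul_comm, Nat.pow_mul_r; apply HN; lia.
Qed.

Open Scope nat_scope.

Fixpoint fact_quot (m t : nat) : nat :=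
  match t with O => 1 | S t' => (m + S t') * fact_quot m t' end.

Fixpoint s_num_tail (m t : nat) : nat :=
  match t with O => 0 | S t' => (m + S t') * s_num_tail m t' + 1 end.

Lemma fact_add (m t : nat) : fact (m + t) = fact m * fact_quot m t.
Proof.
  induction t as [|t IH]; [simpl; rewrite Nat.add_0_r; lia|].
  rewrite Nat.add_succ_r; simpl fact_quot; simpl fact; rewrite IH.
  rewrite Nat.add_succ_r; ring.
Qed.

Lemma s_num_add (m t : nat) : s_num (m + t) = s_num m * fact_quot m t + s_num_tail m t.
Proof.
  induction t as [|t IH]; [simpl; rewrite Nat.add_0_r; lia|].
  rewrite Nat.add_succ_r; simpl fact_quot; simpl s_num_tail; simpl s_num; rewrite IH.
  rewrite Nat.add_succ_r; ring.
Qed.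

Lemma fact_quot_le (m t : nat) : fact_quot m t <= (m + t) ^ t.
Proof.
  induction t as [|t IH]; simpl; [lia|].
  apply Nat.mul_le_mono_l; etransitivity; [exact IH|].
  apply Nat.pow_le_mono_l; lia.
Qed.

Lemma s_num_tail_le (m t : nat) : s_num_tail m t <= (m + t) ^ S t.
Proof.
  induction t as [|t IH]; simpl s_num_tail; [lia|].
  assert ((m + t) ^ S t < (m + S t) ^ S t) by (apply Nat.pow_lt_mono_l; lia).
  rewrite (Nat.pow_succ_r' _ (S t)); nia.
Qed.

Lemma s_num_tail_pos (m t : nat) : 0 < t -> 0 < s_num_tail m t.
Proof. destruct t; simpl; lia. Qed.

Open Scope Z_scope.

Lemma mul_divide_mul_gcd (a b M : Z) : (a | M) -> (b | M) -> (a * b | M * Z.gcd a b).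
Proof.
  intros Ha Hb.
  pose proof (Z.lcm_least a b M Ha Hb) as Hl.
  set (g := Z.gcd a b) in *.
  destruct (Z.eq_dec g 0) as [Hg|Hg].
  - apply Z.gcd_eq_0 in Hg as [-> ->]; destruct Ha as [z ->]; exists 0; lia.
  - destruct (Z.gcd_divide_r a b) as [c Hc]; fold g in Hc.
    unfold Z.lcm in Hl; fold g in Hl.
    rewrite Hc, Z.div_mul in Hl by exact Hg; rewrite Z.divide_abs_l in Hl.
    rewrite Hc, Z.mul_assoc; apply Z.mul_divide_mono_r, Hl.
Qed.

Lemma three_divisors_le (d1 d2 d3 F1 F2 F3 N1 N2 N3 A12 A13 A23 T12 T13 T23 : Z) :
  (d1 | N1) -> (d2 | N2) -> (d3 | N3) -> (d1 | F1) -> (d2 | F2) -> (d3 | F3) ->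
  F3 = F1 * A13 -> F3 = F2 * A23 ->
  N2 = N1 * A12 + T12 -> N3 = N1 * A13 + T13 -> N3 = N2 * A23 + T23 ->
  0 < F3 -> 0 < T12 -> 0 < T13 -> 0 < T23 ->
  d1 * d2 * d3 <= F3 * T12 * T13 * T23.
Proof.
  intros HN1 HN2 HN3 HF1 HF2 HF3 E13 E23 R12 R13 R23 HF T12p T13p T23p.
  assert (HF13 : (d1 | F3)) by (rewrite E13; now apply Z.divide_mul_l).
  assert (HF23 : (d2 | F3)) by (rewrite E23; now apply Z.divide_mul_l).
  assert (H12 : (d1 * d2 | F3 * T12)).
  { apply (Z.divide_trans _ (F3 * Z.gcd d1 d2)); [now apply mul_divide_mul_gcd|].
    apply Z.mul_divide_mono_l.
    replace T12 with (N2 - N1 * A12) by lia.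
    apply Z.divide_sub_r.
    - apply (Z.divide_trans _ d2); [apply Z.gcd_divide_r | exact HN2].
    - apply Z.divide_mul_l, (Z.divide_trans _ d1); [apply Z.gcd_divide_l | exact HN1]. }
  assert (H123 : (d1 * d2 * d3 | F3 * T12 * Z.gcd (d1 * d2) d3)).
  { apply mul_divide_mul_gcd; [exact H12 | now apply Z.divide_mul_l]. }
  assert (Hg : (Z.gcd (d1 * d2) d3 | T13 * T23)).
  { replace (T13 * T23) with (N3 * (N3 - N1 * A13 - N2 * A23) + N1 * N2 * (A13 * A23))
      by (replace T13 with (N3 - N1 * A13) by lia;
          replace T23 with (N3 - N2 * A23) by lia; ring).
    apply Z.divide_add_r; apply Z.divide_mul_l.
    - apply (Z.divide_trans _ d3); [apply Z.gcd_divide_r | exact HN3].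
    - apply (Z.divide_trans _ (d1 * d2)); [apply Z.gcd_divide_l|].
      destruct HN1 as [x1 E1], HN2 as [x2 E2]; exists (x1 * x2); rewrite E1, E2; ring. }
  apply Z.divide_pos_le; [nia|].
  replace (F3 * T12 * T13 * T23) with (F3 * T12 * (T13 * T23)) by ring.
  apply (Z.divide_trans _ _ _ H123), Z.mul_divide_mono_l, Hg.
Qed.

Lemma large_divisors_mul_lt (c F1 F2 F3 d1 d2 d3 D : Z) :
  0 < F1 -> 0 < F2 -> 0 < F3 -> 0 < d1 -> 0 < d2 -> 0 < d3 ->
  F1 < c * d1 * d1 -> F2 < c * d2 * d2 -> F3 < c * d3 * d3 ->
  d1 * d2 * d3 <= F3 * D -> F1 * F2 < c ^ 3 * F3 * D ^ 2.
Proof.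
  intros HF1 HF2 HF3 Hd1 Hd2 Hd3 H1 H2 H3 HD.
  assert (H12 : F1 * F2 < (c * d1 * d1) * (c * d2 * d2)) by (apply Z.mul_lt_mono_nonneg; lia).
  assert (H123 : F1 * F2 * F3 < c ^ 3 * (d1 * d2 * d3) ^ 2).
  { replace (c ^ 3 * (d1 * d2 * d3) ^ 2) with ((c * d1 * d1) * (c * d2 * d2) * (c * d3 * d3))
      by ring.
    apply Z.mul_lt_mono_nonneg; lia. }
  assert (Hsq : (d1 * d2 * d3) ^ 2 <= (F3 * D) ^ 2) by (apply Z.pow_le_mono_l; nia).
  assert (Hc : 0 < c ^ 3) by (apply Z.pow_pos_nonneg; nia).
  apply (Z.mul_lt_mono_pos_r F3); [exact HF3|].
  apply (Z.lt_le_trans _ _ _ H123).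
  replace (c ^ 3 * F3 * D ^ 2 * F3) with (c ^ 3 * (F3 * D) ^ 2) by ring.
  apply Z.mul_le_mono_nonneg_l; lia.
Qed.

Lemma three_convergents_fact_lt (m1 m2 m3 : nat) : (m1 < m2 < m3)%nat ->
  is_convergent (exp 1) (s m1) -> is_convergent (exp 1) (s m2) ->
  is_convergent (exp 1) (s m3) ->
  (fact m1 * fact m2 < S m3 ^ 3 * fact m3 *
     (s_num_tail m1 (m2 - m1) * s_num_tail m1 (m3 - m1) * s_num_tail m2 (m3 - m2)) ^ 2)%nat.
Proof.
  intros Hm C1 C2 C3.
  destruct (convergent_s_divisor _ C1) as [d1 [Hd1 [HN1 [HF1 Hb1]]]].
  destruct (convergent_s_divisor _ C2) as [d2 [Hd2 [HN2 [HF2 Hb2]]]].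
  destruct (convergent_s_divisor _ C3) as [d3 [Hd3 [HN3 [HF3 Hb3]]]].
  pose proof (fact_add m1 (m3 - m1)) as E13; pose proof (fact_add m2 (m3 - m2)) as E23.
  pose proof (s_num_add m1 (m2 - m1)) as R12; pose proof (s_num_add m1 (m3 - m1)) as R13.
  pose proof (s_num_add m2 (m3 - m2)) as R23.
  replace (m1 + (m2 - m1))%nat with m2 in R12 by lia.
  replace (m1 + (m3 - m1))%nat with m3 in E13, R13 by lia.
  replace (m2 + (m3 - m2))%nat with m3 in E23, R23 by lia.
  pose proof (s_num_tail_pos m1 (m2 - m1) ltac:(lia)).
  pose proof (s_num_tail_pos m1 (m3 - m1) ltac:(lia)).
  pose proof (s_num_tail_pos m2 (m3 - m2) ltac:(lia)).
  pose proof (lt_O_fact m1); pose proof (lt_O_fact m2); pose proof (lt_O_fact m3).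
  assert (Hprod : d1 * d2 * d3 <= Z.of_nat (fact m3) * Z.of_nat (s_num_tail m1 (m2 - m1))
                     * Z.of_nat (s_num_tail m1 (m3 - m1)) * Z.of_nat (s_num_tail m2 (m3 - m2))).
  { apply (three_divisors_le d1 d2 d3 _ _ _ _ _ _
      (Z.of_nat (fact_quot m1 (m2 - m1))) (Z.of_nat (fact_quot m1 (m3 - m1)))
      (Z.of_nat (fact_quot m2 (m3 - m2))) _ _ _ HN1 HN2 HN3 HF1 HF2 HF3); lia. }
  apply Nat2Z.inj_lt; rewrite !Nat2Z.inj_mul, !Nat2Z.inj_pow, !Nat2Z.inj_mul.
  apply (large_divisors_mul_lt _ _ _ _ d1 d2 d3); nia.
Qed.

Open Scope nat_scope.

Lemma fact_lt_pow_of_three_convergents (n k m1 m2 m3 : nat) :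
  n <= m1 < m2 -> m2 < m3 < n + k ->
  is_convergent (exp 1) (s m1) -> is_convergent (exp 1) (s m2) ->
  is_convergent (exp 1) (s m3) ->
  fact n < (n + k) ^ (7 * k + 3).
Proof.
  intros Hm1 Hm3 C1 C2 C3.
  pose proof (three_convergents_fact_lt m1 m2 m3 ltac:(lia) C1 C2 C3) as H.
  set (X := n + k) in *.
  assert (Htail : forall m t, 0 < t -> m + t < X -> t < k -> s_num_tail m t <= X ^ k).
  { intros m t Ht Hmt Htk; etransitivity; [apply s_num_tail_le|].
    apply Nat.pow_le_mono; lia. }
  assert (HT : (s_num_tail m1 (m2 - m1) * s_num_tail m1 (m3 - m1) * s_num_tail m2 (m3 - m2)) ^ 2
               <= X ^ (6 * k)).
  { replace (6 * k) with ((k + k + k) * 2) by lia.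
    rewrite Nat.pow_mul_r, !Nat.pow_add_r.
    apply Nat.pow_le_mono_l, Nat.mul_le_mono; [apply Nat.mul_le_mono|]; apply Htail; lia. }
  assert (Hf3 : fact m3 <= fact n * X ^ k).
  { replace m3 with (n + (m3 - n)) at 1 by lia; rewrite fact_add.
    apply Nat.mul_le_mono_l; etransitivity; [apply fact_quot_le|].
    apply Nat.pow_le_mono; lia. }
  assert (HS : S m3 ^ 3 <= X ^ 3) by (apply Nat.pow_le_mono_l; lia).
  pose proof (fact_le n m1 ltac:(lia)); pose proof (fact_le n m2 ltac:(lia)).
  pose proof (lt_O_fact n).
  apply (Nat.mul_lt_mono_pos_l (fact n)); [lia|].
  replace (7 * k + 3) with (3 + k + 6 * k) by lia; rewrite !Nat.pow_add_r.
  apply (Nat.le_lt_trans _ (fact m1 * fact m2)); [nia|].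
  apply (Nat.lt_le_trans _ _ _ H).
  replace (fact n * (X ^ 3 * X ^ k * X ^ (6 * k)))
    with (X ^ 3 * (fact n * X ^ k) * X ^ (6 * k)) by ring.
  apply Nat.mul_le_mono; [apply Nat.mul_le_mono|]; assumption.
Qed.

Open Scope R_scope.

Theorem theorem3p2 :
  forall k : nat, (0 < k)%nat ->
  exists N : nat, forall n : nat, (N <= n)%nat ->
    forall i j l : nat, (i < j)%nat -> (j < l)%nat -> (l < k)%nat ->
      ~ (is_convergent (exp 1) (s (n + i)) /\
         is_convergent (exp 1) (s (n + j)) /\
         is_convergent (exp 1) (s (n + l))).
Proof.
  intros k _.
  destruct (poly_lt_fact_eventually k (7 * k + 3)) as [N HN].
  exists N; intros n Hn i j l Hij Hjl Hlk [Ci [Cj Cl]].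
  pose proof (fact_lt_pow_of_three_convergents n k (n + i) (n + j) (n + l)
                ltac:(lia) ltac:(lia) Ci Cj Cl).
  specialize (HN n Hn); lia.
Qed.
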